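(* Let $d\ge2$ and let $P$ be an essential pattern subgroup of $G(d)$ with $P(d-1)=G(d-1)$ and $[G(d):P]=4$. Then there exist $k_0,\ldots,k_{d-2}\in\{0,1,2,3\}$ such that $P$ is generated by $\{a_iz_{k_i}: 0\le i\le d-2\}\cup\{[a_1,a_{d-1}]\}$, where $z_0=\mathrm{id}$, $z_1=a_{d-1}$, $z_2=a_{d-1}^{a_0}$, $z_3=[a_0,a_{d-1}]$.
   Context: Let $X=\{0,1\}$, $X^*$ the rooted binary tree of finite words, $G(d)$ the automorphism group of the finite tree of words of length $\le d$; finite sections $g(wv)=g(w)g_w(v)$; $\pi_k$ restriction to words of length $\le k$, $P(k)=\pi_k(P)$. A subgroup $P\le G(d)$ is an essential pattern group if for every $p\in P$ and $i\in\{0,1\}$ there is $q\in P$ with $\pi_{d-1}(q)=p_i$. For $0\le i\le d-1$, $a_i\in G(d)$ swaps $0^i0w$ with $0^i1w$ for all words $w$ and fixes all other words. $[h,k]=h^{-1}k^{-1}hk$ and $h^k=k^{-1}hk$. *)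

From HB Require Import structures.
From mathcomp Require Import all_boot all_order all_fingroup.
Set Implicit Arguments. Unset Strict Implicit. Unset Printing Implicit Defensive.

(* Words over X = {0,1}: 0 = false, 1 = true. *)
Fixpoint words (n : nat) : seq (seq bool) :=
  if n is n'.+1 then [seq b :: w | b <- [:: false; true], w <- words n'] else [:: [::]].

Definition allwords (d : nat) : seq (seq bool) := flatten [seq words n | n <- iota 0 d.+1].

Lemma mem_words n w : (w \in words n) = (size w == n).
Proof.
elim: n w => [|n IH] w; first by case: w.
case: w => [|b w].
  by apply/flattenP => -[s /mapP [c _ ->] /mapP [w0 _]].
have Hm : forall c, (b :: w \in [seq c :: w0 | w0 <- words n]) = (c == b) && (w \in words n).
  move=> c; apply/mapP/andP => [[w0 Hw0 [-> ->]]|[/eqP -> Hw]]; first by [].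
  by exists w.
rewrite /= ?cats0 !mem_cat ?in_nil ?orbF !Hm IH eqSS; by case: (b) => /=; rewrite ?andbF ?orbF.
Qed.

Lemma mem_allwords d w : (w \in allwords d) = (size w <= d).
Proof.
apply/flattenP/idP => [[s /mapP [n Hn ->]]|Hw].
  rewrite mem_words => /eqP Hs; rewrite mem_iota add0n ltnS in Hn; by rewrite Hs.
exists (words (size w)); last by rewrite mem_words.
by apply/mapP; exists (size w) => //; rewrite mem_iota add0n ltnS.
Qed.

(* Vertices of the finite tree of words of length <= d. *)
Notation W d := (seq_sub (allwords d)).

(* The action of a permutation of W d on words (identity outside W d). *)
Definition gact d (g : {perm W d}) (w : seq bool) : seq bool :=
  if insub w is Some x then ssval (g x) else w.

Definition parent (w : seq bool) : seq bool := take (size w).-1 w.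

(* G(d): automorphisms of the rooted tree of words of length <= d, i.e.
   bijections preserving word length (hence the root) and the parent map. *)
Definition Gd (d : nat) : {set {perm W d}} :=
  [set g : {perm W d} | [forall x : W d,
     (size (ssval (g x)) == size (ssval x)) &&
     (gact g (parent (ssval x)) == parent (ssval (g x)))]].

(* a_i on words: swaps 0^i 0 w with 0^i 1 w, fixes all other words. *)
Definition aswap (i : nat) (w : seq bool) : seq bool :=
  if (take i w == nseq i false) && (i < size w)
  then set_nth false w i (~~ nth false w i) else w.

Lemma size_aswap i w : size (aswap i w) = size w.
Proof.
rewrite /aswap; case: ifP => // /andP [_ H].
by rewrite size_set_nth; apply/maxn_idPr.
Qed.

Lemma aswapK i : involutive (aswap i).
Proof.
move=> w; rewrite {2}/aswap; case: ifP => [/andP [H1 H2]|Hn]; last by rewrite /aswap Hn.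
rewrite /aswap.
have -> : take i (set_nth false w i (~~ nth false w i)) = take i w.
  apply: (@eq_from_nth _ false); first by rewrite !size_take size_set_nth (maxn_idPr H2).
  move=> j; rewrite size_take size_set_nth (maxn_idPr H2) H2 => Hj.
  by rewrite !nth_take // nth_set_nth /= (ltn_eqF Hj).
rewrite H1 size_set_nth (maxn_idPr H2) H2 /=.
rewrite nth_set_nth /= eqxx negbK.
apply: (@eq_from_nth _ false); first by rewrite !size_set_nth !(maxn_idPr H2).
move=> j _; rewrite !nth_set_nth /=; case: eqP => [->|/eqP/negbTE Hji] //; by rewrite nth_set_nth /= Hji.
Qed.

Definition aswapW d (i : nat) (x : W d) : W d :=
  SeqSub (ssval := aswap i (ssval x))
    (eq_ind_r (fun b => b = true) (ssvalP x)
      (etrans (mem_allwords d _) (etrans (congr1 (leq^~ d) (size_aswap i _))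
        (esym (mem_allwords d _))))).

Lemma aswapWK d i : involutive (@aswapW d i).
Proof. by move=> x; apply: val_inj; rewrite /= aswapK. Qed.

Definition a (d i : nat) : {perm W d} := perm (inv_inj (@aswapWK d i)).

Local Open Scope group_scope.

Definition z (d : nat) (k : nat) : {perm W d} :=
  match k with
  | 0 => 1
  | 1 => a d d.-1
  | 2 => a d d.-1 ^ a d 0
  | _ => [~ a d 0, a d d.-1]
  end.

(* The section g_i of g at the first-level vertex i, restricted (pi_{d-1}) to words of
   length <= d-1, compared pointwise: pi_{d-1}(q) = g_i. *)
Definition restr_eq_section d (q g : {perm W d}) (i : bool) : Prop :=
  forall v : seq bool, size v <= d.-1 -> gact q v = drop 1 (gact g (i :: v)).

Definition essential d (P : {set {perm W d}}) : Prop :=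
  forall p, p \in P -> forall i : bool, exists2 q, q \in P & restr_eq_section q p i.

(* P(d-1) = G(d-1), i.e. pi_{d-1}(P) = G(d-1) (the inclusion pi_{d-1}(P) <= G(d-1)
   is automatic for P <= G(d)): every element of G(d-1) is the restriction of some q in P. *)
Definition full_restr d (P : {set {perm W d}}) : Prop :=
  forall h : {perm W d.-1}, h \in Gd d.-1 ->
    exists2 q, q \in P & forall v : seq bool, size v <= d.-1 -> gact q v = gact h v.

(* Let [St d] be the kernel of the restriction [G(d) -> G(d-1)]; it is an elementary abelian
   2-group generated by the swaps of the two children of the vertices of length [d-1].
   Since [P(d-1) = G(d-1)] we have [P * St d = G(d)], so [M := St d :&: P] is a
   [G(d)]-invariant subgroup of index 4 in [St d]. Conjugation by [a_0] and [a_1] permutes the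
   swaps at [00..0], [010..0], [10..0] and [110..0], and a case analysis in the Klein four
   group [St d / M] shows that [M] contains [[a_1, a_(d-1)]] = swap(010..0) swap(00..0),
   hence its normal closure [St_even d]. As [St d = St_even d * <z_1, z_2>] has order at most
   [4 |St_even d|], [M = St_even d], so [St d] is the union of the cosets [M z_k]. Since [G(d)]
   is generated by the [a_i] and [a_(d-1)] lies in [St d], every [a_i] can be corrected by a
   [z_k] into [P]; the resulting elements and [[a_1, a_(d-1)]] generate a subgroup [H <= P]
   with [H * St d = G(d)] and [St d :&: P <= H], whence [H = P]. *)

From Pilot Require Import Defs.
From mathcomp Require Import all_boot all_order all_fingroup.
From mathcomp Require Import zify.
Set Implicit Arguments. Unset Strict Implicit. Unset Printing Implicit Defensive.

(* Plain [gact] would refer to the group action notation of mathcomp's action.v. *)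
Notation gact := Defs.gact.

Section GroupFacts.

Variable gT : finGroupType.
Implicit Types (x y : gT) (H K M P : {group gT}).

Local Open Scope group_scope.

Lemma cycle_involution x : x * x = 1 -> <[x]> \subset [set 1; x].
Proof.
move=> xx; apply/subsetP => _ /cycleP [n ->]; rewrite !inE.
by elim: n => [|n]; rewrite ?eqxx // expgSr => /orP [] /eqP ->; rewrite ?mul1g ?xx eqxx ?orbT.
Qed.

Lemma norm_meet_abelian P K : abelian K -> P \subset 'N(K) -> P * K \subset 'N(K :&: P).
Proof.
move=> cKK nKP; apply: mul_subG; first by rewrite normsI ?normG.
by rewrite sub_abelian_norm ?subsetIl.
Qed.

Lemma eq_of_sub_mulg H P K : H \subset P -> P \subset H * K -> K :&: P \subset H -> P :=: H.
Proof.
move=> sHP sPHK sKPH; apply/eqP; rewrite eqEsubset sHP andbT.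
by rewrite -(setIidPr sPHK) -group_modl // -{2}(mulGid H) mulgS.
Qed.

Lemma index4_cosets M K x1 x2 y : M \subset K -> #|K : M| = 4 ->
  x1 \in K -> x2 \in K -> commute x1 x2 ->
  x1 \notin M -> x2 \notin M -> x1 * x2^-1 \notin M -> x1 * x2 \notin M -> y \in K ->
  [\/ y \in M, y * x1^-1 \in M, y * x2^-1 \in M | y * (x1 * x2)^-1 \in M].
Proof.
move=> sMK iKM k1 k2 C n1 n2 n12 n12' ky.
set R := M :* 1 |: (M :* x1 |: (M :* x2 |: [set M :* (x1 * x2)])).
have sR : R \subset rcosets M K.
  by apply/subsetP => X; rewrite !inE -?orbA; case/or4P => /eqP ->; apply/rcosetsP;
    [exists 1 | exists x1 | exists x2 | exists (x1 * x2)]; rewrite ?group1 ?groupM.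
have rcoset_neq u v : u * v^-1 \notin M -> M :* u != M :* v.
  by apply: contra => /eqP E; rewrite -mem_rcoset -E rcoset_refl.
have nV u : u \notin M -> u^-1 \notin M by rewrite groupV.
have cR : #|R| = 4.
  rewrite !cardsU1 cards1 !inE !(negbTE (rcoset_neq _ _ _)) // ?mul1g ?nV //.
  - by rewrite invMg mulgA mulgV mul1g nV.
  - by rewrite [x1 * x2]C invMg mulgA mulgV mul1g nV.
have ER : R = rcosets M K by apply/eqP; rewrite eqEcard sR cR -iKM /indexg leqnn.
have : M :* y \in R by rewrite ER; apply/rcosetsP; exists y.
rewrite !inE -?orbA; case/or4P => /eqP E.
- by apply: Or41; rewrite -(mulg1 y) -invg1 -mem_rcoset -E rcoset_refl.
- by apply: Or42; rewrite -mem_rcoset -E rcoset_refl.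
- by apply: Or43; rewrite -mem_rcoset -E rcoset_refl.
- by apply: Or44; rewrite -mem_rcoset -E rcoset_refl.
Qed.

Lemma commute_tperm (T : finType) (x y u v : T) :
  x != u -> x != v -> y != u -> y != v -> commute (tperm x y) (tperm u v).
Proof.
by move=> xu xv yu yv; apply/commgP/conjg_fixP; rewrite tpermJ !tpermD // eq_sym.
Qed.

End GroupFacts.

Lemma size_ssval_W d (x : W d) : size (ssval x) <= d.
Proof. by rewrite -mem_allwords; apply: ssvalP. Qed.

Lemma gactE d (g : {perm W d}) (x : W d) : gact g (ssval x) = ssval (g x).
Proof. by rewrite /gact (@valK _ _ (W d)). Qed.

Lemma gact_out d (g : {perm W d}) w : d < size w -> gact g w = w.
Proof. by move=> Hw; rewrite /gact insubF // mem_allwords leqNgt Hw. Qed.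

Lemma gact_in d (g : {perm W d}) w : size w <= d ->
  exists x : W d, ssval x = w /\ gact g w = ssval (g x).
Proof.
move=> Hw; have Hm : w \in allwords d by rewrite mem_allwords.
by exists (SeqSub Hm); rewrite -gactE.
Qed.

Lemma gactM d (g h : {perm W d}) w : gact (g * h)%g w = gact h (gact g w).
Proof.
case: (leqP (size w) d) => Hw; last by rewrite !gact_out.
by have [x [<- ->]] := gact_in (g * h)%g Hw; rewrite !gactE permM.
Qed.

Lemma gact1 d w : gact (1%g : {perm W d}) w = w.
Proof.
case: (leqP (size w) d) => Hw; last by rewrite gact_out.
by have [x [<- ->]] := gact_in 1%g Hw; rewrite perm1.
Qed.

Lemma gactK d (g : {perm W d}) : cancel (gact g) (gact g^-1).
Proof. by move=> w; rewrite -gactM mulgV gact1. Qed.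

Lemma gactVK d (g : {perm W d}) : cancel (gact g^-1) (gact g).
Proof. by move=> w; rewrite -gactM mulVg gact1. Qed.

Lemma gact_inj d (g : {perm W d}) : injective (gact g).
Proof. exact: can_inj (gactK g). Qed.

Lemma eq_perm_gact d (g h : {perm W d}) :
  (forall w, size w <= d -> gact g w = gact h w) -> g = h.
Proof.
move=> Hgh; apply/permP => x; apply: val_inj => /=.
by rewrite -!gactE Hgh // size_ssval_W.
Qed.

Lemma inGd d (g : {perm W d}) :
  reflect (forall w, size w <= d ->
             size (gact g w) = size w /\ gact g (parent w) = parent (gact g w))
          (g \in Gd d).
Proof.
rewrite inE; apply: (iffP forallP) => [Hg w Hw | Hg x].
  have [x [Hx ->]] := gact_in g Hw.
  by have /andP [/eqP H1 /eqP H2] := Hg x; rewrite -Hx H1 H2.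
by have [H1 H2] := Hg _ (size_ssval_W x); rewrite -gactE H1 H2 !eqxx.
Qed.

Lemma size_gact d (g : {perm W d}) w : g \in Gd d -> size (gact g w) = size w.
Proof.
move/inGd => Hg; case: (leqP (size w) d) => Hw; first by case: (Hg w Hw).
by rewrite gact_out.
Qed.

Lemma gact_parent d (g : {perm W d}) w : g \in Gd d -> size w <= d ->
  gact g (parent w) = parent (gact g w).
Proof. by move/inGd => Hg Hw; case: (Hg w Hw). Qed.

Lemma group_set_Gd d : group_set (Gd d).
Proof.
apply/andP; split; first by apply/inGd => w Hw; rewrite !gact1.
apply/subsetP => g /mulsgP [x y Hx Hy ->]; apply/inGd => w Hw.
rewrite !gactM !size_gact //; split => //.
by rewrite gact_parent // gact_parent // size_gact.
Qed.

Canonical Gd_group d := Group (group_set_Gd d).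

Lemma size_parent w : size (parent w) = (size w).-1.
Proof. by rewrite /parent size_take; case: (size w) => //= n; rewrite ltnSn. Qed.

Lemma take_iter_parent w m : m <= size w -> take m w = iter (size w - m) parent w.
Proof.
move Hk: (size w - m) => k; elim: k w Hk => [|k IH] w Hk Hm.
  have -> : m = size w by lia.
  by rewrite take_size.
have Hp : size (parent w) - m = k by rewrite size_parent; lia.
rewrite iterSr -IH //; last by rewrite size_parent; lia.
by rewrite /parent take_takel //; lia.
Qed.

Lemma gact_take d (g : {perm W d}) m w : g \in Gd d -> size w <= d ->
  gact g (take m w) = take m (gact g w).
Proof.
move=> Hg Hw; case: (leqP m (size w)) => Hm; last first.
  by rewrite !take_oversize ?size_gact //; apply: ltnW.
rewrite (take_iter_parent Hm) (take_iter_parent (m := m)) ?size_gact //.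
elim: (size w - m) => [|k IH] //=; rewrite -IH gact_parent //.
by elim: k {IH} => [|k IHk] //=; rewrite size_parent; lia.
Qed.

Lemma rcons_take_nth (v : seq bool) n : size v = n.+1 -> v = rcons (take n v) (nth false v n).
Proof. by move=> Hv; rewrite -take_nth ?Hv // -Hv take_size. Qed.

Lemma gact_rcons d (g : {perm W d}) u b : g \in Gd d -> size u < d ->
  exists b', gact g (rcons u b) = rcons (gact g u) b' /\
             gact g (rcons u (~~ b)) = rcons (gact g u) (~~ b').
Proof.
move=> Hg Hu.
have child c : exists c', gact g (rcons u c) = rcons (gact g u) c'.
  set v := gact g (rcons u c).
  have Hv : size v = (size u).+1 by rewrite size_gact // size_rcons.
  exists (nth false v (size u)); rewrite {1}(rcons_take_nth Hv); congr rcons.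
  by rewrite -gact_take ?size_rcons // -cats1 take_size_cat.
have [b1 H1] := child b; have [b2 H2] := child (~~ b).
exists b1; split => //; rewrite H2; congr rcons.
have : b2 != b1.
  apply/eqP => E; have := H2; rewrite E -H1 => /gact_inj/eqP.
  by rewrite eqseq_rcons eqxx /=; case: (b).
by case: (b1) (b2) => [] [].
Qed.

Lemma aswap_id i w : ~~ ((take i w == nseq i false) && (i < size w)) -> aswap i w = w.
Proof. by rewrite /aswap => /negbTE ->. Qed.

Lemma nth_aswap_neq i w j : j != i -> nth false (aswap i w) j = nth false w j.
Proof. by move=> ji; rewrite /aswap; case: ifP => // _; rewrite nth_set_nth /= (negbTE ji). Qed.

Lemma nth_aswap i w : take i w = nseq i false -> i < size w ->
  nth false (aswap i w) i = ~~ nth false w i.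
Proof. by move=> H1 H2; rewrite /aswap H1 eqxx H2 nth_set_nth /= eqxx. Qed.

Lemma aswap_take i m w : aswap i (take m w) = take m (aswap i w).
Proof.
apply: (@eq_from_nth _ false); first by rewrite size_aswap !size_take size_aswap.
rewrite size_aswap size_take_min => j Hj; rewrite nth_take; last by lia.
case: (eqVneq j i) Hj => [-> Hi|ji Hj]; last by rewrite !nth_aswap_neq // nth_take //; lia.
have Him : i < m by lia.
rewrite /aswap take_takel ?(ltnW Him) // size_take_min.
have -> : (i < minn m (size w)) = (i < size w) by lia.
by case: ifP => _; rewrite ?nth_set_nth /= ?eqxx nth_take.
Qed.

Lemma aswap_nseq j b r : aswap j (nseq j false ++ b :: r) = nseq j false ++ ~~ b :: r.
Proof.
rewrite /aswap take_size_cat ?size_nseq // eqxx size_cat size_nseq /= addnS ltnS leq_addr /=.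
rewrite nth_cat size_nseq ltnn subnn /=.
apply: (@eq_from_nth _ false); first by rewrite size_set_nth !size_cat /= size_nseq; lia.
move=> k _; rewrite nth_set_nth /= !nth_cat size_nseq.
case: eqP => [->|/eqP ne]; first by rewrite ltnn subnn.
by case: ltnP => // H; case E: (k - j) => [|m] //; lia.
Qed.

Lemma gact_a d i w : size w <= d -> gact (a d i) w = aswap i w.
Proof. by move=> Hw; have [x [<- ->]] := gact_in (a d i) Hw; rewrite permE. Qed.

Lemma a_Gd d i : a d i \in Gd d.
Proof.
apply/inGd => w Hw; rewrite !gact_a ?size_aswap ?size_parent //; last by lia.
by rewrite /parent aswap_take size_aswap.
Qed.

Local Open Scope group_scope.

(* [mkW d w] is the vertex [w] when [size w <= d] and the root otherwise. *)
Definition mkW d (w : seq bool) : W d :=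
  insubd (SeqSub (etrans (mem_allwords d [::]) (leq0n d))) w.

Lemma mkWK d w : size w <= d -> ssval (mkW d w) = w.
Proof. by move=> Hw; rewrite /mkW insubdK // mem_allwords. Qed.

Lemma eq_mkW d (x : W d) w : size w <= d -> (x == mkW d w) = (ssval x == w).
Proof. by move=> Hw; rewrite -(inj_eq val_inj) /= mkWK. Qed.

Lemma perm_mkW d (g : {perm W d}) w : size w <= d -> g (mkW d w) = mkW d (gact g w).
Proof.
move=> Hw; apply: val_inj => /=; have [x [Hx Hg]] := gact_in g Hw.
by rewrite Hg mkWK ?size_ssval_W // -Hx -gactE mkWK // Hx.
Qed.

Definition swap_at d (u : seq bool) : {perm W d} :=
  tperm (mkW d (rcons u false)) (mkW d (rcons u true)).

Section SwapAt.

Variables (d : nat) (u : seq bool).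
Hypotheses (Hd : 0 < d) (Hu : size u = d.-1).

Let size_child b : size (rcons u b) <= d.
Proof. by rewrite size_rcons Hu; lia. Qed.

Lemma gact_swap_at w : gact (swap_at d u) w =
  if w == rcons u false then rcons u true else if w == rcons u true then rcons u false else w.
Proof.
case: (leqP (size w) d) => Hw; last first.
  rewrite gact_out //; case: eqP => [E|_]; first by move: Hw; rewrite E ltnNge size_child.
  by case: eqP => [E|_] //; move: Hw; rewrite E ltnNge size_child.
have [x [<- ->]] := gact_in (swap_at d u) Hw; rewrite /swap_at.
case: tpermP => [->|->|/eqP x0 /eqP x1]; rewrite ?mkWK // ?eqxx //.
  by case: eqP => // /eqP; rewrite eqseq_rcons eqxx.
by move: x0 x1; rewrite !eq_mkW // => /negbTE -> /negbTE ->.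
Qed.

Lemma gact_swap_at_child b : gact (swap_at d u) (rcons u b) = rcons u (~~ b).
Proof.
rewrite gact_swap_at; case: b; rewrite eqxx //.
by case: eqP => // /eqP; rewrite eqseq_rcons eqxx.
Qed.

Lemma gact_swap_at_id w : ~~ [exists b, w == rcons u b] -> gact (swap_at d u) w = w.
Proof.
by rewrite negb_exists => /forallP Hw; rewrite gact_swap_at (negbTE (Hw false)) (negbTE (Hw true)).
Qed.

Lemma swap_atJ g : g \in Gd d -> swap_at d u ^ g = swap_at d (gact g u).
Proof.
move=> Hg; rewrite /swap_at tpermJ !perm_mkW //.
have [b' [-> ->]] := @gact_rcons d g u false Hg ltac:(rewrite Hu; lia).
by case: b'; rewrite //= tpermC.
Qed.

End SwapAt.

Lemma swap_at2 d u : swap_at d u * swap_at d u = 1.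
Proof. exact: tperm2. Qed.

Lemma swap_atV d u : (swap_at d u)^-1 = swap_at d u.
Proof. exact: tpermV. Qed.

Lemma commute_swap_at d u v : 0 < d -> size u = d.-1 -> size v = d.-1 ->
  commute (swap_at d u) (swap_at d v).
Proof.
move=> Hd Hu Hv; case: (eqVneq u v) => [->|uv]; first exact: commute_refl.
have Hc w b : size w = d.-1 -> size (rcons w b) <= d by move=> Hw; rewrite size_rcons Hw; lia.
have ne b c : mkW d (rcons u b) != mkW d (rcons v c).
  by rewrite eq_mkW ?mkWK ?Hc // eqseq_rcons negb_and uv.
exact: commute_tperm.
Qed.

Definition v00 d := nseq d.-1 false.

Lemma size_v00 d : size (v00 d) = d.-1.
Proof. exact: size_nseq. Qed.

Lemma a_last d : 0 < d -> a d d.-1 = swap_at d (v00 d).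
Proof.
move=> Hd; apply: eq_perm_gact => w Hw; rewrite gact_a //.
case: (boolP [exists b, w == rcons (v00 d) b]) => [/existsP [b /eqP ->]|Hw'].
  by rewrite gact_swap_at_child ?size_v00 // -!cats1 aswap_nseq.
rewrite gact_swap_at_id ?size_v00 // aswap_id //; apply: contra Hw' => /andP [/eqP Ht Hl].
have Hs : size w = d.-1.+1 by move: Hl Hw; case: (d) Hd => //= n _; lia.
by apply/existsP; exists (nth false w d.-1); rewrite {1}(rcons_take_nth Hs) Ht.
Qed.

(** * [G(d)] is generated by [a_0, ..., a_(d-1)] *)

Definition a_set d : {set {perm W d}} := [set a d i | i : 'I_d].

Lemma mem_a_gen d i : i < d -> a d i \in <<a_set d>>.
Proof. by move=> Hi; apply: mem_gen; apply/imsetP; exists (Ordinal Hi). Qed.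

Lemma a_gen_sub_Gd d : <<a_set d>> \subset Gd d.
Proof. by rewrite gen_subG; apply/subsetP => x /imsetP [i _ ->]; apply: a_Gd. Qed.

Lemma mem_a_gen_Gd d g : g \in <<a_set d>> -> g \in Gd d.
Proof. exact: subsetP (a_gen_sub_Gd d) g. Qed.

(* The transporter of the vertex [0^n] to [p] is built from right to left: after [i] steps
   the last [i] letters of [p] are in place. *)
Lemma transporter_suffix d n p i : n < d -> size p = n -> i <= n ->
  exists2 c, c \in <<a_set d>> &
    gact c (nseq n false) = nseq (n - i) false ++ drop (n - i) p /\
    (forall w, (forall j, n - i <= j -> j < n -> nth false p j -> take j w != nseq j false) ->
       gact c w = w).
Proof.
move=> Hnd Hp; elim: i => [_|i IH Hi].
  exists 1; first exact: group1.
  by rewrite subn0 drop_oversize ?Hp // cats0; split=> [|*]; rewrite ?gact1.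
have [c Hc [Hc0 Hfix]] := IH (ltnW Hi).
set j := n - i.+1; have Hj : n - i = j.+1 by rewrite /j; lia.
have Hdrop : drop j p = nth false p j :: drop j.+1 p by rewrite (drop_nth false) // Hp /j; lia.
have Hns : nseq j.+1 false = nseq j false ++ [:: false] by rewrite -addn1 nseqD.
have cG := mem_a_gen_Gd Hc.
case Hpj: (nth false p j); last first.
  exists c => //; split => //; first by rewrite Hc0 Hj Hns -catA Hdrop Hpj.
  move=> w Hw; apply: Hfix => k Hk1 Hk2 Hk3; apply: Hw => //.
  by case: (eqVneq k j) Hk3 => [->|kj _]; [rewrite Hpj | rewrite /j; lia].
exists (c * a d j); first by rewrite groupM // mem_a_gen //; lia.
split.
- rewrite gactM Hc0 Hj gact_a; last by rewrite size_cat size_nseq size_drop Hp; lia.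
  by rewrite Hns -catA /= aswap_nseq Hdrop Hpj.
- move=> w Hw; rewrite gactM Hfix; last by move=> k Hk1; apply: Hw; lia.
  case: (leqP (size w) d) => Hwd; last by rewrite gact_out.
  have Htj : take j w != nseq j false by apply: Hw; rewrite ?Hpj // /j; lia.
  by rewrite gact_a // aswap_id // negb_and Htj.
Qed.

Lemma prefix_transporter d n p : n < d -> size p = n ->
  exists2 c, c \in <<a_set d>> & gact c (nseq n false) = p /\
    (forall w, (forall j, j < n -> nth false p j -> take j w != nseq j false) -> gact c w = w).
Proof.
move=> Hnd Hp; have [c Hc [Hc0 Hfix]] := transporter_suffix Hnd Hp (leqnn n).
exists c => //; split => //; first by rewrite Hc0 subnn drop0.
by move=> w Hw; apply: Hfix => j _; apply: Hw.
Qed.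

Definition swaps_children d (p : seq bool) (s : {perm W d}) : Prop :=
  [/\ s \in Gd d, (forall w, size w <= size p -> gact s w = w),
      (forall b, gact s (rcons p b) = rcons p (~~ b)) &
      (forall w, size w = (size p).+1 -> take (size p) w != p -> gact s w = w)].

Lemma swaps_children_a d n : n < d -> swaps_children (nseq n false) (a d n).
Proof.
move=> Hn; rewrite /swaps_children size_nseq; split => [|w Hw|b|w Hw Hne]; first exact: a_Gd.
- rewrite gact_a; last by lia.
  by rewrite aswap_id // negb_and ltnNge Hw orbT.
- by rewrite gact_a -?cats1 ?aswap_nseq // size_cat size_nseq addn1.
- by rewrite gact_a ?aswap_id ?Hw // negb_and Hne.
Qed.

Lemma swaps_childrenJ d p s g : g \in Gd d -> size p < d ->
  swaps_children p s -> swaps_children (gact g p) (s ^ g).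
Proof.
move=> Hg Hp [Hs Hlow Hchild Hhigh]; have HgV : g^-1 \in Gd d by rewrite groupV.
rewrite /swaps_children size_gact //; split => [|w Hw|b|w Hw Hne]; first by rewrite groupJ.
- by rewrite conjgE !gactM Hlow ?gactVK // size_gact.
- have [b' [E1 E2]] := @gact_rcons d g^-1 (gact g p) b HgV ltac:(by rewrite size_gact).
  rewrite gactK in E1 E2; rewrite conjgE !gactM E1 Hchild -E2 -gactM.
  by rewrite mulVg gact1.
- rewrite conjgE !gactM Hhigh ?gactVK // ?size_gact //.
  rewrite -gact_take ?Hw //; apply: contra Hne => /eqP Ep.
  by rewrite -{2}Ep gactVK.
Qed.

Lemma level_transitive d n p : n < d -> size p = n ->
  exists2 c, c \in <<a_set d>> & gact c (nseq n false) = p.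
Proof. by move=> Hn Hp; have [c Hc [Hc0 _]] := prefix_transporter Hn Hp; exists c. Qed.

Lemma exists_swaps_children d p : size p < d ->
  exists2 s, s \in <<a_set d>> & swaps_children p s.
Proof.
move=> Hp; have [c Hc <-] := level_transitive Hp (erefl _).
exists (a d (size p) ^ c); first by rewrite groupJ // mem_a_gen.
by apply: swaps_childrenJ; [exact: mem_a_gen_Gd | rewrite size_nseq | exact: swaps_children_a].
Qed.

Definition moved d n (g : {perm W d}) : {set W d} :=
  [set y : W d | (size (ssval y) == n.+1) && (g y != y)].

Section FixNextLevel.

Variables (d n : nat) (g : {perm W d}).
Hypotheses (Hn : n < d) (Hg : g \in Gd d) (Hfix : forall w, size w <= n -> gact g w = w).

Lemma moved_swaps_children_proper (y : W d) s : y \in moved n g ->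
  swaps_children (take n (ssval y)) s -> moved n (s * g) \proper moved n g.
Proof.
rewrite inE => /andP [/eqP Hy Hmv] [_ Hslow Hschild Hshigh].
set p := take n (ssval y); set b := nth false (ssval y) n.
have Hyp : ssval y = rcons p b by apply: rcons_take_nth.
have Hp : size p = n by rewrite size_takel // Hy.
rewrite Hp in Hslow Hshigh.
have [b' [Hb Hnb]] := @gact_rcons d g p b Hg ltac:(by rewrite Hp).
rewrite (Hfix (w := p)) ?Hp // in Hb Hnb.
have Hb' : b' = ~~ b.
  apply/eqP; move: Hmv; apply: contraNeq => Eb; apply/eqP/val_inj => /=.
  by rewrite -gactE Hyp Hb; case: (b) (b') Eb => [] [].
have gswap c : gact g (rcons p c) = rcons p (~~ c).
  have [->|->] : c = b \/ c = ~~ b by case: c; case: (b); [left|right|right|left].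
    by rewrite Hb Hb'.
  by rewrite Hnb Hb'.
apply/properP; split.
  apply/subsetP => x; rewrite !inE => /andP [/eqP Hx Hmvx]; rewrite Hx eqxx /=.
  apply: contra Hmvx => /eqP Egx; apply/eqP/val_inj => /=; rewrite -gactE gactM.
  case: (eqVneq (take n (ssval x)) p) => Hxp; last by rewrite Hshigh // gactE Egx.
  have Hxc : ssval x = rcons p (nth false (ssval x) n) by rewrite -Hxp; apply: rcons_take_nth.
  move/(congr1 val): Egx => /=; rewrite -gactE Hxc gswap => /eqP.
  by rewrite eqseq_rcons eqxx; case: (nth _ _ _).
exists y; first by rewrite inE Hy eqxx.
by rewrite inE Hy eqxx negbK; apply/eqP/val_inj; rewrite /= -gactE gactM Hyp Hschild gswap negbK.
Qed.

End FixNextLevel.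

Lemma fix_next_level d n (X : {group {perm W d}}) g : n < d -> g \in Gd d ->
  (forall w, size w <= n -> gact g w = w) ->
  (forall p, size p = n -> exists2 s, s \in X & swaps_children p s) ->
  exists2 x, x \in X & forall w, size w <= n.+1 -> gact (x * g) w = w.
Proof.
move=> Hn Hg Hfix HX.
move: {2}#|moved n g| (leqnn #|moved n g|) => N.
elim: N g Hg Hfix => [|N IH] g Hg Hfix Hcard.
  move: Hcard; rewrite leqn0 => /eqP /cards0_eq Hmoved; exists 1; first exact: group1.
  move=> w Hw; rewrite mul1g; case: (ltnP (size w) n.+1) => Hwn; first exact: Hfix.
  have [y [Hyw ->]] := gact_in g (leq_trans Hw Hn).
  have : y \notin moved n g by rewrite Hmoved inE.
  by rewrite inE Hyw eqn_leq Hw Hwn negbK => /eqP ->.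
case: (set_0Vmem (moved n g)) => [Hmoved|[y Hy]].
  by apply: IH; rewrite // Hmoved cards0.
have Hyn : size (take n (ssval y)) = n.
  by move: Hy; rewrite inE => /andP [/eqP Hsy _]; rewrite size_takel // Hsy.
have [s Hs Hsw] := HX _ Hyn; have [sG Hslow _ _] := Hsw.
have Hfix' w : size w <= n -> gact (s * g) w = w by move=> Hw; rewrite gactM Hslow ?Hyn // Hfix.
have Hcard' : #|moved n (s * g)| <= N.
  have Hsub := moved_swaps_children_proper Hn Hg Hfix Hy Hsw.
  by rewrite -ltnS (leq_trans _ Hcard) // proper_card.
have [x Hx Hxfix] := IH (s * g) (groupM sG Hg) Hfix' Hcard'.
by exists (x * s); rewrite ?groupM // -mulgA.
Qed.

Lemma fixing_sub_swaps d m (X : {group {perm W d}}) : X \subset Gd d ->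
  (forall p, m <= size p < d -> exists2 s, s \in X & swaps_children p s) ->
  forall g, g \in Gd d -> (forall w, size w <= m -> gact g w = w) -> g \in X.
Proof.
move=> sXG HX; move Hk: (d - m) => k; elim: k m Hk HX => [|k IH] m Hk HX g Hg Hfix.
  suff -> : g = 1 by apply: group1.
  by apply: eq_perm_gact => w Hw; rewrite gact1 Hfix //; lia.
have Hmd : m < d by lia.
have [x Hx Hxfix] : exists2 x, x \in X & forall w, size w <= m.+1 -> gact (x * g) w = w.
  by apply: fix_next_level => // p Hp; apply: HX; rewrite Hp leqnn.
rewrite -(groupMl _ Hx); apply: IH (m.+1) _ _ _ _ Hxfix; first by lia.
  by move=> p /andP [Hp1 Hp2]; apply: HX; rewrite Hp2 andbT ltnW.
by rewrite groupM // (subsetP sXG).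
Qed.

Lemma Gd_sub_a_gen d : Gd d \subset <<a_set d>>.
Proof.
apply/subsetP => g Hg; apply: (@fixing_sub_swaps d 0 <<a_set d>>%G) => //.
- exact: a_gen_sub_Gd.
- by move=> p /andP [_ Hp]; apply: exists_swaps_children.
- by move=> w; rewrite leqn0 size_eq0 => /eqP ->; apply/eqP; rewrite -size_eq0 size_gact.
Qed.

Lemma swap_at_a_gen d u : 0 < d -> size u = d.-1 -> swap_at d u \in <<a_set d>>.
Proof.
move=> Hd Hu; have [c Hc Hcu] := @level_transitive d d.-1 u ltac:(lia) Hu.
rewrite -Hcu -swap_atJ ?size_nseq ?mem_a_gen_Gd // -a_last //.
by rewrite groupJ // mem_a_gen //; lia.
Qed.

Lemma swap_at_Gd d u : 0 < d -> size u = d.-1 -> swap_at d u \in Gd d.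
Proof. by move=> Hd Hu; apply/mem_a_gen_Gd/swap_at_a_gen. Qed.

Lemma swaps_children_swap_at d u : 0 < d -> size u = d.-1 -> swaps_children u (swap_at d u).
Proof.
move=> Hd Hu; split=> [|w Hw|b|w Hw Hne]; first exact: swap_at_Gd.
- apply: gact_swap_at_id => //; apply/existsP => -[b /eqP Ew].
  by move: Hw; rewrite Ew size_rcons ltnn.
- exact: gact_swap_at_child.
- apply: gact_swap_at_id => //; apply: contra Hne => /existsP [b /eqP ->].
  by rewrite -cats1 take_size_cat.
Qed.

(** * The level stabiliser [St d] *)

Definition St d : {set {perm W d}} :=
  [set g in Gd d | [forall y : W d, (size (ssval y) < d) ==> (g y == y)]].

Lemma inSt d (g : {perm W d}) :
  reflect (g \in Gd d /\ forall w, size w < d -> gact g w = w) (g \in St d).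
Proof.
rewrite [g \in St d]inE; apply: (iffP andP) => [[Hg /forallP Hfix]|[Hg Hfix]]; split => //.
  move=> w Hw; have [y [Hy ->]] := gact_in g (ltnW Hw).
  by move/implyP: (Hfix y); rewrite Hy => /(_ Hw) /eqP ->.
apply/forallP => y; apply/implyP => Hy; apply/eqP/val_inj => /=.
by rewrite -gactE Hfix.
Qed.

Lemma group_set_St d : group_set (St d).
Proof.
apply/andP; split; first by apply/inSt; split=> [|w _]; rewrite ?group1 ?gact1.
apply/subsetP => g /mulsgP [x y /inSt [Hx Hxfix] /inSt [Hy Hyfix] ->].
by apply/inSt; split=> [|w Hw]; rewrite ?groupM // gactM Hxfix // Hyfix.
Qed.

Canonical St_group d := Group (group_set_St d).

Lemma St_sub_Gd d : St d \subset Gd d.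
Proof. by apply/subsetP => g /inSt []. Qed.

Lemma Gd_norm_St d : Gd d \subset 'N(St d).
Proof.
apply/subsetP => g Hg; rewrite inE; apply/subsetP => y; rewrite mem_conjg.
rewrite -{2}(conjgKV g y); move: (y ^ g^-1) => x /inSt [Hx Hfix].
apply/inSt; split=> [|w Hw]; first by rewrite groupJ.
by rewrite conjgE !gactM Hfix ?gactVK // size_gact // groupV.
Qed.

Lemma swap_at_St d u : 0 < d -> size u = d.-1 -> swap_at d u \in St d.
Proof.
move=> Hd Hu; have [sG Hlow _ _] := swaps_children_swap_at Hd Hu.
by apply/inSt; split=> // w Hw; apply: Hlow; rewrite Hu; lia.
Qed.

Definition swaps d : {set {perm W d}} :=
  [set swap_at d (ssval y) | y : W d & size (ssval y) == d.-1].

Lemma St_sub_swaps_gen d : 0 < d -> St d \subset <<swaps d>>.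
Proof.
move=> Hd; apply/subsetP => g /inSt [Hg Hfix].
apply: (@fixing_sub_swaps d d.-1 <<swaps d>>%G) => //.
- rewrite gen_subG; apply/subsetP => x /imsetP [y]; rewrite inE => /eqP Hy ->.
  exact: swap_at_Gd.
- move=> p /andP [Hp1 Hp2]; have Hp : size p = d.-1 by lia.
  exists (swap_at d p); last exact: swaps_children_swap_at.
  apply: mem_gen; apply/imsetP; exists (mkW d p); rewrite ?inE mkWK ?Hp //; lia.
- by move=> w Hw; apply: Hfix; lia.
Qed.

Lemma St_abelian d : 0 < d -> abelian (St d).
Proof.
move=> Hd; apply: abelianS (St_sub_swaps_gen Hd) _; rewrite abelian_gen.
apply/centsP => x /imsetP [y]; rewrite inE => /eqP Hy -> x' /imsetP [y'].
rewrite inE => /eqP Hy' ->.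
exact: commute_swap_at.
Qed.

(** * The subgroup [St_even] and the commutator [[a_1, a_(d-1)]] *)

Definition v10 d := true :: nseq d.-2 false.
Definition v01 d := aswap 1 (v00 d).
Definition v11 d := aswap 0 (v01 d).

Lemma size_v01 d : size (v01 d) = d.-1.
Proof. by rewrite size_aswap size_v00. Qed.

Lemma size_v11 d : size (v11 d) = d.-1.
Proof. by rewrite size_aswap size_v01. Qed.

Lemma aswap0_v00 d : 2 <= d -> aswap 0 (v00 d) = v10 d.
Proof. by case: d => [|[|d]] // _; rewrite /v00 -[nseq _ _]cat0s aswap_nseq. Qed.

Lemma size_v10 d : 2 <= d -> size (v10 d) = d.-1.
Proof. by move=> Hd; rewrite -aswap0_v00 // size_aswap size_v00. Qed.

Lemma aswap1_head1 w : nth false w 0 -> aswap 1 w = w.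
Proof. by case: w => [|[] w] // _; rewrite aswap_id. Qed.

Lemma head_v01 d : nth false (v01 d) 0 = false.
Proof. by rewrite nth_aswap_neq // nth_nseq if_same. Qed.

Lemma head_v11 d : 1 < d -> nth false (v11 d) 0 = true.
Proof. by move=> Hd; rewrite nth_aswap ?take0 ?head_v01 ?size_v01 //; lia. Qed.

Lemma take_v01 d j : 2 <= j -> j < d.-1 -> take j (v01 d) != nseq j false.
Proof.
move=> Hj Hjd; apply: contraTneq isT => /(congr1 (nth false ^~ 1%N)).
rewrite nth_take; last by lia.
by rewrite nth_aswap /v00 ?take_nseq ?size_nseq ?nth_nseq ?if_same ?Hj //; lia.
Qed.

Lemma swap_atJa d i u : 0 < d -> size u = d.-1 -> swap_at d u ^ a d i = swap_at d (aswap i u).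
Proof. by move=> Hd Hu; rewrite swap_atJ ?a_Gd // gact_a // Hu; lia. Qed.

Lemma commg_a1_last d : 0 < d -> [~ a d 1, a d d.-1] = swap_at d (v01 d) * swap_at d (v00 d).
Proof. by move=> Hd; rewrite commgEr a_last // swap_atV swap_atJa ?size_v00. Qed.

Definition half_level d b : {set W d} :=
  [set y : W d | (size (ssval y) == d.-1) && (nth false (ssval y) 0 == b)].

(* Generated by products of two swaps below the same first-level vertex: these are the elements
   of [St d] performing an even number of swaps below [0] and an even number below [1]. *)
Definition St_even d : {set {perm W d}} :=
  <<[set swap_at d (v00 d) * swap_at d (ssval y) | y in half_level d false] :|:
    [set swap_at d (v10 d) * swap_at d (ssval y) | y in half_level d true]>>.

Section NormalClosure.

Variables (d : nat) (N : {group {perm W d}}).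
Hypotheses (Hd : 2 <= d) (nNG : Gd d \subset 'N(N)) (cN : [~ a d 1, a d d.-1] \in N).

Let Hd0 : 0 < d. Proof. by lia. Qed.

Let memJN g x : g \in Gd d -> x \in N -> x ^ g \in N.
Proof. by move=> Hg Hx; rewrite memJ_norm // (subsetP nNG). Qed.

Let swap_pairJ g u v : g \in Gd d -> size u = d.-1 -> size v = d.-1 ->
  (swap_at d u * swap_at d v) ^ g = swap_at d (gact g u) * swap_at d (gact g v).
Proof. by move=> Hg Hu Hv; rewrite conjMg !swap_atJ. Qed.

(* A transporter of [v00] to [u] fixing [v01] carries [[a_1, a_(d-1)]] to
   [swap_at v01 * swap_at u]; when [u_1 = 1] we first replace [u] by [aswap 1 u]. *)
Lemma swap_v00_mul_mem u : size u = d.-1 -> nth false u 0 = false ->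
  swap_at d (v00 d) * swap_at d u \in N.
Proof.
move=> Hu Hu0; have Hlt : d.-1 < d by lia.
have c01N := cN; rewrite commg_a1_last // in c01N.
have fix_v01 (c : {perm W d}) w : size w = d.-1 -> nth false w 0 = false ->
  (forall w', (forall j, j < d.-1 -> nth false w j -> take j w' != nseq j false) ->
     gact c w' = w') ->
  ~~ nth false w 1 -> gact c (v01 d) = v01 d.
  move=> Hw Hw0 Hc Hw1; apply: Hc => -[|[|j]] Hj //=; rewrite ?Hw0 ?(negbTE Hw1) // => _.
  exact: take_v01.
case Hu1: (nth false u 1).
- set u' := aswap 1 u.
  have H1u : 1 < size u by case: ltnP => // H; move: Hu1; rewrite nth_default.
  have Hpre : take 1 u = nseq 1 false by move: Hu0 H1u; case: (u) => [|[] [|x w]].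
  have [c Hc [Hcu Hcfix]] := prefix_transporter Hlt (etrans (size_aswap 1 u) Hu).
  have Hg : c * a d 1 \in Gd d by rewrite groupM ?a_Gd ?mem_a_gen_Gd.
  have := memJN Hg c01N; rewrite swap_pairJ ?size_v01 ?size_v00 // !gactM Hcu.
  have Hu'0 : nth false u' 0 = false by rewrite nth_aswap_neq.
  have Hu'1 : nth false u' 1 = false by rewrite nth_aswap ?Hu1.
  rewrite (fix_v01 c u') ?Hu'0 ?Hu'1 ?size_aswap //.
  rewrite !gact_a ?size_aswap ?size_v01 ?size_v00 ?Hu; try lia.
  by rewrite /v01 !aswapK.
- have [c Hc [Hcu Hcfix]] := prefix_transporter Hlt Hu.
  have Hcv01 : gact c (v01 d) = v01 d by apply: (fix_v01 c u); rewrite ?Hu1.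
  have := memJN (mem_a_gen_Gd Hc) c01N.
  rewrite swap_pairJ ?size_v01 ?size_v00 ?mem_a_gen_Gd // Hcu Hcv01 => H.
  have -> : swap_at d (v00 d) * swap_at d u =
      (swap_at d (v01 d) * swap_at d (v00 d))^-1 * (swap_at d (v01 d) * swap_at d u).
    by rewrite invMg !swap_atV -mulgA (mulgA (swap_at d (v01 d))) swap_at2 mul1g.
  by rewrite groupM ?groupV.
Qed.

Lemma St_even_sub : St_even d \subset N.
Proof.
rewrite gen_subG; apply/subsetP => x /setUP [] /imsetP [y].
  by rewrite inE => /andP [/eqP Hy /eqP Hy0] ->; apply: swap_v00_mul_mem.
rewrite inE => /andP [/eqP Hy /eqP Hy0] ->.
have Hs : size (aswap 0 (ssval y)) = d.-1 by rewrite size_aswap.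
have := memJN (a_Gd d 0) (swap_v00_mul_mem Hs _); rewrite conjMg !swap_atJa ?size_v00 //.
rewrite aswapK aswap0_v00 //; apply; rewrite nth_aswap ?take0 ?Hy0 // Hy; lia.
Qed.

End NormalClosure.

(** * Subgroups of index 4 in [St d] *)

Section Index4.

Variables (d : nat) (M : {group {perm W d}}).
Hypotheses (Hd : 2 <= d) (sMSt : M \subset St d) (iM : #|St d : M| = 4)
  (nMG : Gd d \subset 'N(M)).

Let Hd0 : 0 < d. Proof. by lia. Qed.

Let memJM g x : g \in Gd d -> (x ^ g \in M) = (x \in M).
Proof. by move=> Hg; rewrite memJ_norm // (subsetP nMG). Qed.

Local Notation al := (swap_at d (v00 d)).
Local Notation be := (swap_at d (v01 d)).
Local Notation ga := (swap_at d (v10 d)).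
Local Notation de := (swap_at d (v11 d)).

Let alJ1 : al ^ a d 1 = be. Proof. by rewrite swap_atJa ?size_v00. Qed.
Let beJ1 : be ^ a d 1 = al. Proof. by rewrite swap_atJa ?size_v01 // aswapK. Qed.
Let gaJ0 : ga ^ a d 0 = al. Proof. by rewrite swap_atJa ?size_v10 // -aswap0_v00 // aswapK. Qed.
Let deJ0 : de ^ a d 0 = be. Proof. by rewrite swap_atJa ?size_v11 // aswapK. Qed.

Let al_be_notin : al * be \notin M -> [/\ al \notin M, be \notin M & al * be^-1 \notin M].
Proof.
move=> nab; have -> : be^-1 = be by apply: swap_atV.
split=> //; apply: contra nab => Hx.
- by have := Hx; rewrite -(memJM _ (a_Gd d 1)) alJ1 => Hbe; apply: groupM.
- by have := Hx; rewrite -(memJM _ (a_Gd d 1)) beJ1 => Hal; apply: groupM.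
Qed.

(* In [St d / M], conjugation by [a_1] swaps the classes of [al] and [be], so its only fixed
   classes are [1] and that of [al * be]. *)
Lemma a1_fixed_class y : al * be \notin M -> y \in St d -> y ^ a d 1 = y -> y \notin M ->
  y * (al * be)^-1 \in M.
Proof.
move=> nab Hy Hy1 ny; have [na nb nab'] := al_be_notin nab.
have Hab : al * be^-1 = (y * al^-1)^-1 * (y * be^-1).
  by rewrite invMg invgK -mulgA (mulgA y^-1) mulVg mul1g.
have Jy1 x : (y * x^-1 \in M) = (y * (x ^ a d 1)^-1 \in M).
  by rewrite -(memJM _ (a_Gd d 1)) conjMg conjVg Hy1.
have := index4_cosets sMSt iM (swap_at_St Hd0 (size_v00 d)) (swap_at_St Hd0 (size_v01 d))
  (commute_swap_at Hd0 (size_v00 d) (size_v01 d)) na nb nab' nab Hy.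
case=> [yM|yal|ybe|//]; first by rewrite yM in ny.
- have ybe : y * be^-1 \in M by move: yal; rewrite Jy1 alJ1.
  by move: nab'; rewrite Hab groupM ?groupV.
- have yal : y * al^-1 \in M by move: ybe; rewrite Jy1 beJ1.
  by move: nab'; rewrite Hab groupM ?groupV.
Qed.

Lemma commg_a1_last_mem_index4 : [~ a d 1, a d d.-1] \in M.
Proof.
rewrite commg_a1_last // (commute_swap_at Hd0 (size_v01 d) (size_v00 d)).
apply/negP => /negP nab; have [na nb nab'] := al_be_notin nab.
have a1_fix u : nth false u 0 -> size u = d.-1 -> swap_at d u ^ a d 1 = swap_at d u.
  by move=> Hu0 Hu; rewrite swap_atJa // aswap1_head1.
have nga : ga \notin M by rewrite -(memJM _ (a_Gd d 0)) gaJ0.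
have nde : de \notin M by rewrite -(memJM _ (a_Gd d 0)) deJ0.
have Hga := a1_fixed_class nab (swap_at_St Hd0 (size_v10 Hd))
  (a1_fix (v10 d) isT (size_v10 Hd)) nga.
have Hde := a1_fixed_class nab (swap_at_St Hd0 (size_v11 d))
  (a1_fix (v11 d) (head_v11 Hd) (size_v11 d)) nde.
have : ga * de^-1 \in M.
  by have := groupM Hga (groupVr Hde); rewrite [(de * _)^-1]invMg -mulgA mulVKg.
by rewrite -(memJM _ (a_Gd d 0)) conjMg conjVg gaJ0 deJ0 (negbTE nab').
Qed.

End Index4.

(** * The Klein four group of the [z_k] *)

Definition klein d : {set {perm W d}} := <[z d 1]> <*> <[z d 2]>.

Lemma z1E d : 0 < d -> z d 1 = swap_at d (v00 d).
Proof. exact: a_last. Qed.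

Lemma z2E d : 2 <= d -> z d 2 = swap_at d (v10 d).
Proof. by move=> Hd; rewrite /= a_last ?swap_atJa ?size_v00 ?aswap0_v00 //; lia. Qed.

Lemma z3E d : 2 <= d -> z d 3 = z d 2 * z d 1.
Proof.
move=> Hd; have Hd0 : 0 < d by lia.
by rewrite z2E // z1E //= commgEr a_last // swap_atV swap_atJa ?size_v00 // aswap0_v00.
Qed.

Lemma z_St d j : 2 <= d -> j < 4 -> z d j \in St d.
Proof.
move=> Hd; have Hd0 : 0 < d by lia.
have z1St : z d 1 \in St d by rewrite z1E // swap_at_St ?size_v00.
have z2St : z d 2 \in St d by rewrite z2E // swap_at_St ?size_v10.
by case: j => [|[|[|[|j]]]] // _; rewrite ?group1 // z3E // groupM.
Qed.

Lemma z_involutive d j : 2 <= d -> j \in [:: 1; 2]%N -> z d j * z d j = 1.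
Proof.
by move=> Hd; rewrite !inE => /orP [] /eqP ->; rewrite ?z1E ?z2E ?swap_at2 //; lia.
Qed.

Lemma commute_klein d : 2 <= d -> commute <[z d 1]> <[z d 2]>.
Proof.
move=> Hd; apply: centC; apply: (sub_abelian_cent2 (St_abelian _)); try lia;
by rewrite cycle_subG z_St.
Qed.

Lemma mem_klein d x : 2 <= d -> x \in klein d -> exists j : 'I_4, x = z d j.
Proof.
move=> Hd; rewrite /klein comm_joingE; last exact: commute_klein.
case/mulsgP => x1 x2 Hx1 Hx2 ->.
have := subsetP (cycle_involution (z_involutive Hd (j := 1%N) isT)) x1 Hx1.
have := subsetP (cycle_involution (z_involutive Hd (j := 2%N) isT)) x2 Hx2.
rewrite !inE => /orP [] /eqP -> /orP [] /eqP ->.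
- by exists (inord 0); rewrite inordK // mulg1.
- by exists (inord 1); rewrite inordK // mulg1.
- by exists (inord 2); rewrite inordK // mul1g.
- exists (inord 3); rewrite inordK // z3E // z1E ?z2E //; last by lia.
  by apply: commute_swap_at; rewrite ?size_v00 ?size_v10 //; lia.
Qed.

Lemma St_even_sub_St d : 2 <= d -> St_even d \subset St d.
Proof.
move=> Hd; rewrite gen_subG; apply/subsetP => x /setUP [] /imsetP [y];
  rewrite inE => /andP [/eqP Hy _] ->;
  by rewrite groupM ?swap_at_St ?size_v00 ?size_v10 //; lia.
Qed.

Lemma klein_sub_St d : 2 <= d -> klein d \subset St d.
Proof. by move=> Hd; rewrite join_subG !cycle_subG !z_St. Qed.

Lemma St_sub_even_klein d : 2 <= d -> St d \subset St_even d * klein d.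
Proof.
move=> Hd; have Hd0 : 0 < d by lia.
have cEK : commute (St_even d) (klein d).
  apply: centC; apply: (sub_abelian_cent2 (St_abelian Hd0)).
  - exact: St_even_sub_St.
  - exact: klein_sub_St.
rewrite -comm_joingE //; apply: subset_trans (St_sub_swaps_gen Hd0) _.
rewrite gen_subG; apply/subsetP => x /imsetP [y]; rewrite inE => /eqP Hy ->.
have genE b t : t \in <[z d (if b then 2 else 1)%N]> ->
    t * swap_at d (ssval y) \in St_even d -> swap_at d (ssval y) \in St_even d <*> klein d.
  move=> Ht Hty; rewrite -(mulKg t (swap_at d _)) groupM //.
    by rewrite groupV (subsetP (joing_subr _ _)) // (subsetP _ _ Ht) //; case: (b);
      [apply: joing_subr | apply: joing_subl].
  exact: (subsetP (joing_subl _ _)).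
have gen b u : u \in half_level d b -> swap_at d (if b then v10 d else v00 d) * swap_at d (ssval u)
    \in St_even d.
  move=> Hu; apply: mem_gen; apply/setUP.
  by case: b Hu => Hu; [right | left]; apply/imsetP; exists u.
have Hyb : y \in half_level d (nth false (ssval y) 0) by rewrite inE Hy !eqxx.
case: (nth _ _ _) Hyb => Hyb;
  [apply: (genE true (swap_at d (v10 d))) | apply: (genE false (swap_at d (v00 d)))];
  rewrite ?z1E ?z2E ?cycle_id ?(gen _ _ Hyb) //; lia.
Qed.

Lemma card_St_le d : 2 <= d -> #|St d| <= #|St_even d| * 4.
Proof.
move=> Hd; have sKz : klein d \subset [set z d j | j : 'I_4].
  by apply/subsetP => x /(mem_klein Hd) [j ->]; apply: imset_f.
have cK : #|klein d| <= 4.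
  by rewrite (leq_trans (subset_leq_card sKz)) // (leq_trans (leq_imset_card _ _)) ?card_ord.
apply: leq_trans (subset_leq_card (St_sub_even_klein Hd)) _.
apply: leq_trans (dvdn_leq _ (dvdn_cardMg _ _)) _; first by rewrite muln_gt0 !cardG_gt0.
by rewrite leq_mul2l cK orbT.
Qed.

Lemma St_even_eq_index4 d (M : {group {perm W d}}) : 2 <= d -> M \subset St d ->
  #|St d : M| = 4 -> Gd d \subset 'N(M) -> M :=: St_even d.
Proof.
move=> Hd sMSt iM nMG.
have sEM : St_even d \subset M.
  exact: St_even_sub Hd nMG (commg_a1_last_mem_index4 Hd sMSt iM nMG).
apply/eqP; rewrite eq_sym eqEcard sEM /= -(leq_pmul2r (isT : 0 < 4)).
by rewrite -{1}iM Lagrange //; apply: card_St_le.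
Qed.

Lemma restriction_exists d (g : {perm W d}) : g \in Gd d ->
  exists2 h : {perm W d.-1}, h \in Gd d.-1 & forall v, size v <= d.-1 -> gact h v = gact g v.
Proof.
move=> Hg; pose f (x : W d.-1) := mkW d.-1 (gact g (ssval x)).
have Hf x : ssval (f x) = gact g (ssval x) by rewrite mkWK // size_gact // size_ssval_W.
have finj : injective f by move=> x y E; apply/val_inj/(@gact_inj d g); rewrite -!Hf E.
have hE v : size v <= d.-1 -> gact (perm finj) v = gact g v.
  by move=> Hv; have [x [<- ->]] := gact_in (perm finj) Hv; rewrite permE Hf.
exists (perm finj) => //; apply/inGd => w Hw; rewrite hE ?size_gact //; split=> //.
by rewrite !hE ?gact_parent ?size_parent //; lia.
Qed.

Lemma mul_St_full d (P : {group {perm W d}}) :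
  P \subset Gd d -> full_restr P -> P * St d = Gd d.
Proof.
move=> sPG Hfull; apply/eqP; rewrite eqEsubset mul_subG ?St_sub_Gd //=.
apply/subsetP => g Hg; have [h Hh hE] := restriction_exists Hg.
have [q Hq qE] := Hfull h Hh; have qG : q \in Gd d by apply: (subsetP sPG).
rewrite -(mulKVg q g); apply: mem_mulg => //; apply/inSt; split; first by rewrite groupM ?groupV.
move=> w Hw; have Hv : size (gact q^-1 w) <= d.-1 by rewrite size_gact ?groupV //; lia.
by rewrite gactM -hE // -qE // gactVK.
Qed.

Lemma exists_z_mul_mem d (P : {group {perm W d}}) g : 2 <= d ->
  P * St d = Gd d -> St d :&: P = St_even d -> g \in Gd d -> exists j : 'I_4, g * z d j \in P.
Proof.
move=> Hd PSt EM; rewrite -PSt => /mulsgP [p k Hp /(subsetP (St_sub_even_klein Hd)) Hk ->].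
case/mulsgP: Hk => m x Hm Hx ->; have [j Ej] := mem_klein Hd (groupVr Hx).
exists j; rewrite -Ej !mulgA mulgK groupM //.
by move: Hm; rewrite -EM => /setIP [].
Qed.

Lemma Gd_sub_mul_St d (H : {group {perm W d}}) (k : 'I_d.-1 -> 'I_4) : 2 <= d ->
  H \subset Gd d -> (forall i : 'I_d.-1, a d i * z d (k i) \in H) -> Gd d \subset H * St d.
Proof.
move=> Hd sHG Hk; have nStH : H \subset 'N(St d) := subset_trans sHG (Gd_norm_St d).
rewrite -(comm_joingE (normC nStH)); apply: subset_trans (Gd_sub_a_gen d) _.
rewrite gen_subG; apply/subsetP => _ /imsetP [i _ ->].
case: (ltnP i d.-1) => Hi.
  rewrite -(mulgK (z d (k (Ordinal Hi))) (a d i)) groupM ?groupV //.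
    exact: (subsetP (joing_subl _ _)) (Hk (Ordinal Hi)).
  by apply: (subsetP (joing_subr _ _)); rewrite z_St.
have -> : nat_of_ord i = d.-1 by have := ltn_ord i; lia.
by apply: (subsetP (joing_subr _ _)); rewrite a_last ?swap_at_St ?size_v00 //; lia.
Qed.

Lemma eq_gen_of_St_even d (P H : {group {perm W d}}) : 2 <= d ->
  H \subset P -> P \subset Gd d -> Gd d \subset H * St d -> [~ a d 1, a d d.-1] \in H ->
  St d :&: P = St_even d -> P :=: H.
Proof.
move=> Hd sHP sPG sGHSt cH EM; have Hd0 : 0 < d by lia.
have nSHG : Gd d \subset 'N(St d :&: H).
  apply: subset_trans sGHSt _; apply: norm_meet_abelian (St_abelian Hd0) _.
  exact: subset_trans sHP (subset_trans sPG (Gd_norm_St d)).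
have cSH : [~ a d 1, a d d.-1] \in St d :&: H.
  by rewrite inE cH andbT commg_a1_last // groupM ?swap_at_St ?size_v01 ?size_v00.
apply: eq_of_sub_mulg sHP (subset_trans sPG sGHSt) _; rewrite EM.
exact: subset_trans (St_even_sub Hd nSHG cSH) (subsetIr _ _).
Qed.

Theorem mainTheorem10 (d : nat) (P : {group {perm W d}}) :
  2 <= d ->
  P \subset Gd d ->
  essential P ->
  full_restr P ->
  (#|Gd d : P|)%g = 4 ->
  exists k : 'I_d.-1 -> 'I_4,
    (P : {set {perm W d}}) =
    <<[set (a d i * z d (k i))%g | i : 'I_d.-1] :|: [set [~ a d 1, a d d.-1]]>>%g.
Proof.
move=> Hd sPG _ Hfull iP; have Hd0 : 0 < d by lia.
have PSt := mul_St_full sPG Hfull.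
have nMG : Gd d \subset 'N(St d :&: P).
  by rewrite -PSt; apply: norm_meet_abelian (St_abelian Hd0) (subset_trans sPG (Gd_norm_St d)).
have iM : #|St d : St d :&: P| = 4 by rewrite indexgI -iP -PSt indexMg.
have EM := St_even_eq_index4 Hd (subsetIl _ _) iM nMG.
have Hk i : exists j : 'I_4, a d i * z d j \in P := exists_z_mul_mem Hd PSt EM (a_Gd d i).
exists (fun i => xchoose (Hk i)); set H := <<_>>.
have Hgen (i : 'I_d.-1) : a d i * z d (xchoose (Hk i)) \in H.
  by rewrite mem_gen // in_setU; apply/orP; left; apply/imsetP; exists i.
have cH : [~ a d 1, a d d.-1] \in H by rewrite mem_gen // in_setU set11 orbT.
have sHP : H \subset P.
  rewrite gen_subG; apply/subsetP => x /setUP [/imsetP [i _ ->]|/set1P ->].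
    exact: (xchooseP (Hk i)).
  by have := commg_a1_last_mem_index4 Hd (subsetIl _ _) iM nMG => /setIP [].
apply: (eq_gen_of_St_even Hd sHP sPG _ cH EM).
exact: Gd_sub_mul_St Hd (subset_trans sHP sPG) Hgen.
Qed.
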